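(* Let $G$ be a finite abelian group and let $\rho\ge2$ be an integer. Then $$t_\rho(G)\le\left\lfloor\frac{|G|-2}{\rho-1}\right\rfloor+1.$$
   Context: Groups are written additively. For $A\subseteq G$ let $A_0:=A\cup\{0\}$ and $\langle A\rangle^+_\rho:=\rho A_0=\{a_1+\dots+a_\rho:a_i\in A_0\}$. $\operatorname{diam}^+_A(G):=\min\{\rho\in\mathbb{N}_0:\langle A\rangle^+_\rho=G\}$ ($\min\varnothing=\infty$). The period of $S\subseteq G$ is $\pi(S):=\{g\in G:S+g=S\}$; $S$ is aperiodic if $\pi(S)=\{0\}$. A subset $A\subseteq G$ is $\rho$-maximal if it is maximal under inclusion subject to $\operatorname{diam}^+_A(G)\ge\rho$, i.e. subject to $\langle A\rangle^+_{\rho-1}\neq G$. With the convention $\max\varnothing=0$: $t_\rho(G):=\max\{|A|: A \text{ is an aperiodic } \rho\text{-maximal generating set for } G\}$. *)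

From HB Require Import structures.
From mathcomp Require Import all_boot all_order all_algebra all_fingroup.
Set Implicit Arguments. Unset Strict Implicit. Unset Printing Implicit Defensive.
Import GRing.Theory.
Local Open Scope ring_scope.

Section Defs.
Variable G : finZmodType.

Definition A0 (A : {set G}) : {set G} := 0 |: A.

(* <A>^+_rho := rho A_0, with 0 A_0 = {0} *)
Fixpoint sumset (rho : nat) (A : {set G}) : {set G} :=
  match rho with
  | O => [set 0]
  | r.+1 => [set x + a | x in sumset r A, a in A0 A]
  end.

(* diam^+_A(G) >= rho  <->  <A>^+_(rho-1) <> G  (sumsets are increasing) *)
Definition rho_maximal (rho : nat) (A : {set G}) : bool :=
  (sumset rho.-1 A != [set: G]) &&
  [forall B : {set G}, (A \proper B) ==> (sumset rho.-1 B == [set: G])].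

Definition period (S : {set G}) : {set G} := [set g | [set s + g | s in S] == S].
Definition aperiodic (S : {set G}) : bool := period S == [set 0].

Definition generating (A : {set G}) : bool :=
  [forall B : {set G}, ((0 \in B) && [forall x in B, forall y in B, x - y \in B]
                        && (A \subset B)) ==> (B == [set: G])].

(* t_rho(G), with max of empty = 0 *)
Definition t_rho (rho : nat) : nat :=
  \max_(A : {set G} | [&& aperiodic A, rho_maximal rho A & generating A]) #|A|.
End Defs.

(* Kneser's theorem: |A + B| >= |A + P| + |B + P| - |P| for P the period of
   A + B.  It is proved by induction on (|A + B|, |B|), following DeVos: once A
   and B are P-periodic and B has been translated to meet A without lying in it,
   take among the sets C inside A + B with
   |A ∩ B| + |(A ∪ B) + period C| <= |C| + |period C| one of minimal period.
   That period is P: otherwise pick a + b with a + b + h ∉ A + B for some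
   h ∈ period C \ P; adding to C the cross sum (A ∩ x + B ∩ y) ∪ (A ∩ y + B ∩ x)
   over the period-C cosets x ∋ a, y ∋ b gives such a set of smaller period.

   If A is aperiodic and rho-maximal, then 0 ∈ A and maximality forces the
   period of (rho-1)A, hence of every kA with k <= rho-1, into the period of A,
   which is trivial.  Kneser then gives |(k+1)A| >= |kA| + |A| - 1, so
   1 + (rho-1)(|A|-1) <= |(rho-1)A| <= |G| - 1. *)

From HB Require Import structures.
From mathcomp Require Import all_boot all_order all_algebra all_fingroup.
From mathcomp Require Import zify.
Set Implicit Arguments. Unset Strict Implicit. Unset Printing Implicit Defensive.
Import GRing.Theory.
Local Open Scope ring_scope.

(** * Sumsets and periods *)

Definition addset (G : finZmodType) (A B : {set G}) : {set G} :=
  [set x + y | x in A, y in B].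
Notation "A :+: B" := (addset A B) (at level 46, left associativity).

Definition acoset (G : finZmodType) (K : {set G}) (c : G) : {set G} := [set c] :+: K.

Section Addset.
Variable G : finZmodType.
Implicit Types A B C K S X Y : {set G}.

Lemma addsetP A B x :
  reflect (exists2 a, a \in A & exists2 b, b \in B & x = a + b) (x \in A :+: B).
Proof.
apply: (iffP imset2P) => [[a b ha hb ->]|[a ha [b hb ->]]]; last by exists a b.
by exists a => //; exists b.
Qed.

Lemma mem_addset A B a b : a \in A -> b \in B -> a + b \in A :+: B.
Proof. exact: imset2_f. Qed.

Lemma addsetS A A' B B' : A \subset A' -> B \subset B' -> A :+: B \subset A' :+: B'.
Proof.
move=> sA sB; apply/subsetP=> _ /addsetP[a ha [b hb ->]].
by rewrite mem_addset ?(subsetP sA) ?(subsetP sB).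
Qed.

Lemma addsetC A B : A :+: B = B :+: A.
Proof.
apply/setP=> x; apply/addsetP/addsetP=> -[a ha [b hb ->]].
  by exists b => //; exists a; rewrite // addrC.
by exists b => //; exists a; rewrite // addrC.
Qed.

Lemma addsetA A B C : A :+: (B :+: C) = A :+: B :+: C.
Proof.
apply/setP=> x; apply/addsetP/addsetP.
  move=> [a ha [_ /addsetP[b hb [c hc ->]] ->]].
  by exists (a + b); [exact: mem_addset | exists c; rewrite ?addrA].
move=> [_ /addsetP[a ha [b hb ->]] [c hc ->]].
by exists a => //; exists (b + c); [exact: mem_addset | rewrite addrA].
Qed.

Lemma addsetUl X Y K : (X :|: Y) :+: K = (X :+: K) :|: (Y :+: K).
Proof. exact: imset2Ul. Qed.

Lemma add0set B : set0 :+: B = set0.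
Proof. by apply/setP=> x; rewrite inE; apply/addsetP=> -[a]; rewrite inE. Qed.

Lemma addset0 A : A :+: set0 = set0.
Proof. by rewrite addsetC add0set. Qed.

Lemma addset_eq0 A B : (A :+: B == set0) = (A == set0) || (B == set0).
Proof.
have [->|[a ha]] := set_0Vmem A; first by rewrite add0set !eqxx.
have [->|[b hb]] := set_0Vmem B; first by rewrite addset0 !eqxx orbT.
have /set0Pn/negbTE-> : exists x, x \in A :+: B by exists (a + b); exact: mem_addset.
by apply/esym/norP; split; apply/set0Pn; [exists a | exists b].
Qed.

Lemma addset1 A g : A :+: [set g] = [set a + g | a in A].
Proof. exact: imset2_set1r. Qed.

Lemma card_addset1 A g : #|A :+: [set g]| = #|A|.
Proof. by rewrite addset1 card_imset //; exact: addIr. Qed.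

Lemma card_acoset K c : #|acoset K c| = #|K|.
Proof. by rewrite /acoset addsetC card_addset1. Qed.

Lemma leq_card_addset A B b : b \in B -> (#|A| <= #|A :+: B|)%N.
Proof.
by move=> hb; rewrite -(card_addset1 A b) subset_leq_card // addsetS // sub1set.
Qed.

Lemma subset_addset0 S K : 0 \in K -> S \subset S :+: K.
Proof. by move=> h0; apply/subsetP=> s hs; rewrite -[s]addr0 mem_addset. Qed.

Lemma in_acoset K c u : (u \in acoset K c) = (u - c \in K).
Proof.
apply/addsetP/idP => [[_ /set1P-> [k hk ->]]|hu]; first by rewrite addrC addKr.
by exists c; rewrite ?inE //; exists (u - c); rewrite // addrC subrK.
Qed.

Lemma leq_card_overlap (V W X : {set G}) :
  V \subset W -> X \subset W -> (#|V| + #|X| <= #|V :&: X| + #|W|)%N.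
Proof.
move=> sV sX; rewrite -cardsUI addnC leq_add2l subset_leq_card //.
by rewrite subUset sV.
Qed.

Lemma leq_card_overlap2 (V W X Y : {set G}) :
  V \subset W -> X \subset W -> Y \subset W -> X :&: Y = set0 ->
  (#|V| + #|X| + #|Y| <= #|V :&: X| + #|V :&: Y| + #|W|)%N.
Proof.
move=> sV sX sY dXY; have := leq_card_overlap sV (_ : X :|: Y \subset W).
rewrite subUset sX sY setIUr cardsU dXY cards0 subn0 addnA => /(_ isT) /leq_trans.
by apply; rewrite leq_add2r cardsU leq_subr.
Qed.

End Addset.

Section Period.
Variable G : finZmodType.
Implicit Types A B C D K P S X Y : {set G}.

Lemma periodP S g : reflect (forall s, s \in S -> s + g \in S) (g \in period S).
Proof.
rewrite inE; apply: (iffP eqP) => [defS s hs|hS]; first by rewrite -defS; apply/imsetP; exists s.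
apply/eqP; rewrite eqEcard -addset1 card_addset1 leqnn andbT addset1.
by apply/subsetP=> _ /imsetP[s hs ->]; exact: hS.
Qed.

Lemma period0 S : 0 \in period S.
Proof. by apply/periodP=> s; rewrite addr0. Qed.

Lemma periodD S g h : g \in period S -> h \in period S -> g + h \in period S.
Proof. by move=> /periodP hg /periodP hh; apply/periodP=> s /hg/hh; rewrite addrA. Qed.

Lemma periodN S g : g \in period S -> - g \in period S.
Proof.
rewrite inE => /eqP defS; apply/periodP=> s.
by rewrite -{1}defS => /imsetP[s' hs' ->]; rewrite addrK.
Qed.

Lemma periodB S g h : g \in period S -> h \in period S -> g - h \in period S.
Proof. by move=> hg /periodN; exact: periodD. Qed.

Lemma mem_period S g s : g \in period S -> s \in S -> s + g \in S.
Proof. by move/periodP; apply. Qed.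

Lemma mem_periodK S g s : g \in period S -> s + g \in S -> s \in S.
Proof. by move=> /periodN hg /(mem_period hg); rewrite addrK. Qed.

Lemma addset_sub_period S K : K \subset period S -> S :+: K \subset S.
Proof.
move=> sK; apply/subsetP=> _ /addsetP[s hs [k hk ->]].
exact: mem_period (subsetP sK k hk) hs.
Qed.

Lemma addset_periodic S K : 0 \in K -> K \subset period S -> S :+: K = S.
Proof. by move=> h0 sK; apply/eqP; rewrite eqEsubset addset_sub_period ?subset_addset0. Qed.

Lemma addset_period S : S :+: period S = S.
Proof. exact: addset_periodic (period0 S) (subxx _). Qed.

Lemma sub_period S K : S :+: K \subset S -> K \subset period S.
Proof.
move=> sS; apply/subsetP=> k hk; apply/periodP=> s hs.
by apply: (subsetP sS); exact: mem_addset.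
Qed.

Lemma addset_period_neq0 X S : X != set0 -> X :+: period S != set0.
Proof. by move=> Xn; rewrite addset_eq0 negb_or Xn; apply/set0Pn; exists 0; exact: period0. Qed.

Lemma not_mem_period S g : g \notin period S -> exists2 s, s \in S & s + g \notin S.
Proof.
move=> ngS; apply/exists_inP; apply: contraR ngS => /exists_inPn hS.
by apply/periodP=> s /hS; rewrite negbK.
Qed.

Lemma period_addsetl A B : period A \subset period (A :+: B).
Proof.
apply/subsetP=> g hg; apply/periodP=> _ /addsetP[a ha [b hb ->]].
by rewrite addrAC mem_addset ?mem_period.
Qed.

Lemma period_addsetr A B : period B \subset period (A :+: B).
Proof. by rewrite addsetC; exact: period_addsetl. Qed.

Lemma sub_period_addset A B K : K \subset period A -> K \subset period (A :+: B).
Proof. by move=> sK; apply: subset_trans sK (period_addsetl A B). Qed.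

Lemma sub_periodI A B K : K \subset period A -> K \subset period B -> K \subset period (A :&: B).
Proof.
move=> sA sB; apply/subsetP=> k hk; apply/periodP=> s /setIP[hA hB].
by rewrite inE (mem_period _ hA) ?(mem_period _ hB) ?(subsetP sA) ?(subsetP sB).
Qed.

Lemma sub_periodU A B K : K \subset period A -> K \subset period B -> K \subset period (A :|: B).
Proof.
move=> sA sB; apply/subsetP=> k hk; apply/periodP=> s /setUP[h|h].
  by rewrite inE (mem_period _ h) ?(subsetP sA).
by rewrite inE (mem_period _ h) ?(subsetP sB) ?orbT.
Qed.

Lemma period_setIU A B : period A :&: period B \subset period (A :|: B).
Proof. by apply: sub_periodU; [exact: subsetIl | exact: subsetIr]. Qed.

Lemma period_addsetK S : period S :+: period S = period S.
Proof.
apply/eqP; rewrite eqEsubset subset_addset0 ?period0 // andbT.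
by apply/subsetP=> _ /addsetP[g hg [h hh ->]]; exact: periodD.
Qed.

Lemma period_addset_period X S : period S \subset period (X :+: period S).
Proof.
apply: subset_trans (period_addsetr X _); apply/subsetP=> g hg.
by apply/periodP=> h hh; exact: periodD.
Qed.

Lemma addset_period2 P X Y : (X :+: period P) :+: (Y :+: period P) = X :+: Y :+: period P.
Proof.
rewrite -!addsetA; congr (X :+: _).
by rewrite addsetA [period P :+: Y]addsetC -addsetA period_addsetK.
Qed.

Lemma period_translate S g : period (S :+: [set g]) = period S.
Proof.
apply/setP=> k; apply/periodP/periodP => hk s hs.
  have /hk : s + g \in S :+: [set g] by rewrite mem_addset ?inE.
  by rewrite addset1 addrAC => /imsetP[s' hs' /addIr->].
move: hs; rewrite addset1 => /imsetP[s' hs' ->].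
by rewrite addrAC; apply/imsetP; exists (s' + k); rewrite ?hk.
Qed.

Lemma acoset_self P c : c \in acoset (period P) c.
Proof. by rewrite in_acoset subrr period0. Qed.

Lemma acoset_add P c1 c2 u1 u2 :
  u1 \in acoset (period P) c1 -> u2 \in acoset (period P) c2 ->
  u1 + u2 \in acoset (period P) (c1 + c2).
Proof. by rewrite !in_acoset opprD addrACA; exact: periodD. Qed.

Lemma acoset_sub P c u v :
  u \in acoset (period P) c -> v \in acoset (period P) c -> u - v \in period P.
Proof. by rewrite !in_acoset => hu hv; have := periodB hu hv; rewrite opprB subrKA. Qed.

Lemma acoset_addr P c u g :
  u \in acoset (period P) c -> g \in period P -> u + g \in acoset (period P) c.
Proof. by rewrite !in_acoset addrAC; exact: periodD. Qed.

Lemma period_acoset P c : period P \subset period (acoset (period P) c).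
Proof.
apply/subsetP=> g hg; apply/periodP=> u; rewrite !in_acoset => hu.
by rewrite addrAC periodD.
Qed.

Lemma acoset_eq P c1 c2 : c2 - c1 \in period P -> acoset (period P) c1 = acoset (period P) c2.
Proof.
move=> h; apply/setP=> u; rewrite !in_acoset; apply/idP/idP => hu.
  by have := periodB hu h; rewrite opprB addrA subrK.
by have := periodD hu h; rewrite addrA subrK.
Qed.

Lemma acoset_disjoint P c1 c2 : c2 - c1 \notin period P ->
  acoset (period P) c1 :&: acoset (period P) c2 = set0.
Proof.
move=> h; apply/setP=> u; rewrite !inE !in_acoset; apply/negbTE/negP=> /andP[h1 h2].
by case/negP: h; have := periodB h1 h2; rewrite opprB [_ + (c2 - u)]addrC subrKA.
Qed.

Lemma addset_acoset_sub P c X K :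
  X \subset acoset (period P) c -> K \subset period P ->
  X :+: K \subset acoset (period P) c.
Proof.
move=> sX sK; apply: subset_trans (addsetS sX (subxx K)) _.
exact/addset_sub_period/(subset_trans sK)/period_acoset.
Qed.

Lemma period_sub_acoset P S c :
  S \subset acoset (period P) c -> S != set0 -> period S \subset period P.
Proof.
move=> sS /set0Pn[s hs]; apply/subsetP=> g hg.
by have := acoset_sub (subsetP sS _ (mem_period hg hs)) (subsetP sS _ hs); rewrite addrC addKr.
Qed.

Lemma addsetI_sub U Y K : K \subset period Y -> U :+: K :&: Y \subset (U :&: Y) :+: K.
Proof.
move=> sK; apply/subsetP=> _ /setIP[/addsetP[u hu [k hk ->]] hv].
by rewrite mem_addset // inE hu (mem_periodK (subsetP sK k hk)).
Qed.

Lemma acoset_periodic_disjoint C c w :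
  w \in acoset (period C) c -> w \notin C -> acoset (period C) c :&: C = set0.
Proof.
move=> hw wC; apply/setP=> v; rewrite !inE; apply/negbTE/negP=> /andP[hv vC].
by case/negP: wC; rewrite -(subrKC v w) mem_period // (acoset_sub hw hv).
Qed.

Lemma period_setU_acoset C D c :
  let q := acoset (period C) c in
  D \subset q -> D != set0 -> ~~ (q \subset D) -> q :&: C = set0 ->
  period (C :|: D) = period D.
Proof.
move=> q Dq Dn qD qC; have DH := period_sub_acoset Dq Dn.
apply/eqP; rewrite eqEsubset andbC (subset_trans _ (period_setIU C D)) /=; last first.
  by rewrite subsetI DH subxx.
have notC v : v \in q -> v \notin C.
  by move=> vq; apply/negP=> vC; move/setP: qC => /(_ v); rewrite !inE vq vC.
apply/subsetP=> g hg; have [d dD] := set0Pn _ Dn; have dq := subsetP Dq d dD.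
have inCD e : e \in D -> e + g \in C :|: D by move=> eD; rewrite mem_period // inE eD orbT.
have dgD : d + g \in D.
  case/setUP: (inCD d dD) => // dgC; case/subsetPn: qD => v vq vD; exfalso.
  have /(mem_periodK hg) : v + g \in C :|: D.
    by rewrite inE -(subrKC d v) addrAC (mem_period (acoset_sub vq dq) dgC).
  by rewrite inE (negbTE (notC v vq)) (negbTE vD).
have gH : g \in period C by have := acoset_sub (subsetP Dq _ dgD) dq; rewrite addrC addKr.
apply/periodP=> e eD; have egq := acoset_addr (subsetP Dq e eD) gH.
by case/setUP: (inCD e eD) => // egC; case/negP: (notC _ egq).
Qed.

Lemma leq_card_period_cover C D S1 S2 c w :
  let q := acoset (period C) c in
  D \subset q -> w \in q -> w \notin D -> S1 :|: S2 = D -> S1 != set0 -> S2 != set0 ->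
  (#|S1 :&: S2| + #|period S1| + #|period S2| <= #|period C| + #|period D|)%N.
Proof.
move=> q Dq wq wD defD S1n S2n.
have sS1 : S1 \subset D by rewrite -defD subsetUl.
have sS2 : S2 \subset D by rewrite -defD subsetUr.
have wq_sub S : S \subset D -> S != set0 -> acoset (period S) w \subset q.
  move=> sS Sn; rewrite /acoset addset_acoset_sub ?sub1set //.
  exact: period_sub_acoset (subset_trans sS Dq) Sn.
have wS S u : S \subset D -> u \in acoset (period S) w -> u \notin S.
  rewrite in_acoset => sS uw; apply: contra wD => uS; apply: (subsetP sS).
  by apply: (mem_periodK uw); rewrite addrC subrK.
set m1 := acoset (period S1) w; set m2 := acoset (period S2) w.
have cm12 : (#|m1 :&: m2| <= #|period D|)%N.
  rewrite -(card_acoset (period D) w) subset_leq_card //; apply/subsetP=> u.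
  rewrite inE !in_acoset -defD => /andP[h1 h2].
  by apply: (subsetP (period_setIU S1 S2)); rewrite inE h1.
have disj : (m1 :|: m2) :&: (S1 :&: S2) = set0.
  apply/setP=> u; rewrite !inE; apply/negbTE/andP=> -[/orP[] hu /andP[u1 u2]].
    by case/negP: (wS _ _ sS1 hu).
  by case/negP: (wS _ _ sS2 hu).
have cq : (#|m1 :|: m2| + #|S1 :&: S2| <= #|period C|)%N.
  rewrite -(card_acoset (period C) c) -cardsUI disj cards0 addn0 subset_leq_card //.
  by rewrite !subUset wq_sub // wq_sub // (subset_trans (subsetIl _ _) (subset_trans sS1 Dq)).
have := cardsUI m1 m2; rewrite [#|m1|]card_acoset [#|m2|]card_acoset.
by move: cm12 cq; clear; lia.
Qed.

End Period.

(** * Kneser's theorem *)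

Section Kneser.
Variable G : finZmodType.
Implicit Types A B C D K P S X Y : {set G}.

Definition kneser_ineq A B : bool :=
  (#|A :+: period (A :+: B)| + #|B :+: period (A :+: B)|
     <= #|A :+: B| + #|period (A :+: B)|)%N.

Lemma kneser_ineq_weak A B :
  kneser_ineq A B -> (#|A| + #|B| <= #|A :+: B| + #|period (A :+: B)|)%N.
Proof. by apply: leq_trans; rewrite leq_add // subset_leq_card // subset_addset0 ?period0. Qed.

Definition cross_addset H A B (a b : G) : {set G} :=
  (A :&: acoset H a) :+: (B :&: acoset H b) :|: (A :&: acoset H b) :+: (B :&: acoset H a).

Lemma sub_period_cross_addset C A B a b K :
  K \subset period C -> K \subset period A -> K \subset period B ->
  K \subset period (cross_addset (period C) A B a b).
Proof.
move=> KC KA KB; have Kc c := subset_trans KC (period_acoset C c).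
by apply: sub_periodU; apply: sub_period_addset; apply: sub_periodI; rewrite ?KA ?KB ?Kc.
Qed.

Section UnionBound.
Variables (C A B : {set G}) (a b w : G).
Local Notation H := (period C).
Local Notation x := (acoset H a).
Local Notation y := (acoset H b).
Local Notation D := (cross_addset H A B a b).
Local Notation K := (period D).
Local Notation U := (A :|: B).
Hypotheses (ha : a \in A) (hb : b \in B).
Hypotheses (hwq : w \in acoset H (a + b)) (hwD : w \notin D).
Hypothesis IHD : forall X Y, X != set0 -> Y != set0 ->
  (#|X :+: Y| <= #|D|)%N -> kneser_ineq X Y.

Lemma cross_addset_sub_acoset : D \subset acoset H (a + b).
Proof.
apply/subsetP=> _ /setUP[] /addsetP[u1 /setIP[_ h1] [u2 /setIP[_ h2] ->]].
  exact: acoset_add.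
by rewrite addrC; exact: acoset_add.
Qed.

Lemma add_mem_cross_addset : a + b \in D.
Proof. by rewrite inE mem_addset // inE ?ha ?hb acoset_self. Qed.

Lemma period_cross_addset_sub : K \subset H.
Proof.
by apply: period_sub_acoset cross_addset_sub_acoset _; apply/set0Pn; exists (a + b); exact: add_mem_cross_addset.
Qed.

Lemma cross_pair_bound X Y : X != set0 -> Y != set0 -> X :+: Y \subset D ->
  (#|X :+: K| + #|Y :+: K| <= #|X :+: Y :+: K| + #|period (X :+: Y :+: K)|)%N.
Proof.
move=> Xn Yn sXY; rewrite -addset_period2.
apply/kneser_ineq_weak/IHD; rewrite ?addset_period_neq0 // addset_period2 subset_leq_card //.
by rewrite (subset_trans _ (addset_sub_period (subxx K))) // addsetS.
Qed.

Lemma card_addset_period_acoset c :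
  (#|U :+: K :&: acoset H c| <= #|(A :&: acoset H c) :+: K| + #|(B :&: acoset H c) :+: K|)%N.
Proof.
have sKc := subset_trans period_cross_addset_sub (period_acoset C c).
by rewrite (leq_trans (subset_leq_card (addsetI_sub U sKc))) // setIUl addsetUl cardsU leq_subr.
Qed.

Let aU : a \in U. Proof. by rewrite inE ha. Qed.
Let bU : b \in U. Proof. by rewrite inE hb orbT. Qed.

Let sUK : U :+: K \subset U :+: H := addsetS (subxx U) period_cross_addset_sub.
Let sUH c : c \in U -> acoset H c \subset U :+: H.
Proof. by move=> cU; rewrite /acoset addsetS ?sub1set. Qed.

Lemma union_bound_same_acoset : b - a \in H ->
  (#|U :+: K| + #|H| <= #|U :+: H| + #|D| + #|K|)%N.
Proof.
move=> hab; have exy := acoset_eq hab.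
have eD : D = (A :&: x) :+: (B :&: x) by rewrite /cross_addset -exy setUid.
have Axn : A :&: x != set0 by apply/set0Pn; exists a; rewrite inE ha acoset_self.
have Bxn : B :&: x != set0 by apply/set0Pn; exists b; rewrite inE hb exy acoset_self.
have := cross_pair_bound Axn Bxn; rewrite -eD addset_period subxx => /(_ isT).
have := card_addset_period_acoset a.
have := leq_card_overlap sUK (sUH aU); rewrite card_acoset; clear; lia.
Qed.

Lemma union_bound_distinct_acoset : b - a \notin H ->
  (#|U :+: K| + #|H| <= #|U :+: H| + #|D| + #|K|)%N.
Proof.
move=> hab; have := leq_card_overlap2 sUK (sUH aU) (sUH bU) (acoset_disjoint hab).
rewrite !card_acoset.
have cx : (#|U :+: K :&: x| <= #|H|)%N by rewrite -(card_acoset H a) subset_leq_card ?subsetIr.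
have cy : (#|U :+: K :&: y| <= #|H|)%N by rewrite -(card_acoset H b) subset_leq_card ?subsetIr.
have vx := card_addset_period_acoset a; have vy := card_addset_period_acoset b.
have Axn : A :&: x != set0 by apply/set0Pn; exists a; rewrite inE ha acoset_self.
have Byn : B :&: y != set0 by apply/set0Pn; exists b; rewrite inE hb acoset_self.
have p1 := cross_pair_bound Axn Byn (subsetUl _ _).
have [Bx0|Bxn] := eqVneq (B :&: x) set0.
  have eD : D = (A :&: x) :+: (B :&: y) by rewrite /cross_addset Bx0 addset0 setU0.
  rewrite -eD addset_period in p1.
  by rewrite Bx0 add0set cards0 in vx; move: vx cy p1; clear; lia.
have [Ay0|Ayn] := eqVneq (A :&: y) set0.
  have eD : D = (A :&: x) :+: (B :&: y) by rewrite /cross_addset Ay0 add0set setU0.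
  rewrite -eD addset_period in p1.
  by rewrite Ay0 add0set cards0 in vy; move: vy cx p1; clear; lia.
have p2 := cross_pair_bound Ayn Bxn (subsetUr _ _).
have defD : (A :&: x) :+: (B :&: y) :+: K :|: (A :&: y) :+: (B :&: x) :+: K = D.
  by rewrite -addsetUl; exact: addset_period.
have S1n : (A :&: x) :+: (B :&: y) :+: K != set0.
  by rewrite addset_period_neq0 // addset_eq0 negb_or Axn.
have S2n : (A :&: y) :+: (B :&: x) :+: K != set0.
  by rewrite addset_period_neq0 // addset_eq0 negb_or Ayn.
have := leq_card_period_cover cross_addset_sub_acoset hwq hwD defD S1n S2n.
have := cardsUI ((A :&: x) :+: (B :&: y) :+: K) ((A :&: y) :+: (B :&: x) :+: K).
rewrite defD; move: vx vy p1 p2; clear; lia.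
Qed.

Lemma union_bound : (#|U :+: K| + #|H| <= #|U :+: H| + #|D| + #|K|)%N.
Proof.
by have [/union_bound_same_acoset|/union_bound_distinct_acoset] := boolP (b - a \in H).
Qed.

End UnionBound.

(* Orders pairs lexicographically by |A + B|, then by |B + period (A + B)|. *)
Definition kneser_measure A B : nat :=
  (#|A :+: B| * #|G|.+1 + #|B :+: period (A :+: B)|)%N.

Lemma kneser_measure_lt X Y A B :
  (#|X :+: Y| < #|A :+: B|)%N -> (kneser_measure X Y < kneser_measure A B)%N.
Proof.
move=> lt_XY; rewrite /kneser_measure (@leq_trans (#|X :+: Y|.+1 * #|G|.+1)) //.
  by rewrite mulSnr ltn_add2l ltnS max_card.
by rewrite (leq_trans _ (leq_addr _ _)) // leq_mul2r lt_XY orbT.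
Qed.

Section Core.
Variables (A B : {set G}) (a0 b1 : G).
Local Notation S := (A :+: B).
Local Notation L := (period (A :+: B)).
Local Notation I := (A :&: B).
Local Notation U := (A :|: B).
Hypotheses (LA : L \subset period A) (LB : L \subset period B).
Hypotheses (a0A : a0 \in A) (a0B : a0 \in B) (b1B : b1 \in B) (b1A : b1 \notin A).
Hypothesis IH : forall X Y, X != set0 -> Y != set0 ->
  (kneser_measure X Y < kneser_measure A B)%N -> kneser_ineq X Y.

Definition admissible C : bool :=
  [&& C \subset S, C != set0, L \subset period C &
      (#|I| + #|U :+: period C| <= #|C| + #|period C|)%N].

Lemma admissible_card C : admissible C ->
  (#|I| + #|U :+: period C| <= #|C| + #|period C|)%N.
Proof. by case/and4P. Qed.

Lemma admissibleI C : C \subset S -> C != set0 -> L \subset period C ->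
  (#|I| + #|U :+: period C| <= #|C| + #|period C|)%N -> admissible C.
Proof. by move=> *; apply/and4P. Qed.

Lemma addset_setU_setI_sub : U :+: I \subset S.
Proof.
apply/subsetP=> _ /addsetP[u /setUP[uA|uB] [i /setIP[iA iB] ->]]; first exact: mem_addset.
by rewrite addrC mem_addset.
Qed.

Lemma admissible_init : admissible (U :+: I).
Proof.
have Un : U != set0 by apply/set0Pn; exists a0; rewrite inE a0A.
have In : I != set0 by apply/set0Pn; exists a0; rewrite inE a0A a0B.
have LUI : L \subset period (U :+: I) by apply/sub_period_addset/sub_periodU.
rewrite /admissible addset_setU_setI_sub addset_eq0 negb_or Un In LUI /=.
have lt_mu : (kneser_measure U I < kneser_measure A B)%N.
  have [|geS] := ltnP #|U :+: I| #|S|; first exact: kneser_measure_lt.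
  have eS : U :+: I = S by apply/eqP; rewrite eqEcard addset_setU_setI_sub.
  rewrite /kneser_measure eS ltn_add2l (addset_periodic (period0 _) LB).
  rewrite (addset_periodic (period0 _) (sub_periodI LA LB)).
  by apply: proper_card; rewrite properE subsetIr; apply/subsetPn; exists b1; rewrite ?inE ?(negbTE b1A).
apply: leq_trans (IH Un In lt_mu); rewrite addnC leq_add2l.
by rewrite subset_leq_card // subset_addset0 ?period0.
Qed.

Lemma admissible_shrink C : admissible C -> ~~ (period C \subset L) ->
  exists2 C', admissible C' & (#|period C'| < #|period C|)%N.
Proof.
move=> admC /subsetPn[h hC hL]; have ineqC := admissible_card admC.
have /and4P[CS Cn LC _] := admC.
have [_ /addsetP[a aA [b bB ->]] abhS] := not_mem_period hL.
set D := cross_addset (period C) A B a b; set q := acoset (period C) (a + b).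
have Dq : D \subset q := cross_addset_sub_acoset C A B a b.
have abD : a + b \in D := add_mem_cross_addset C aA bB.
have DS : D \subset S by rewrite subUset !addsetS ?subsetIl.
have wq : a + b + h \in q := acoset_addr (acoset_self C (a + b)) hC.
have wD : a + b + h \notin D by apply: contra abhS; exact: (subsetP DS).
have qC : q :&: C = set0 by apply: acoset_periodic_disjoint wq (contra (subsetP CS _) abhS).
have DC : D :&: C = set0 by apply/eqP; rewrite -subset0 -qC setSI.
have ltDS : (#|D| < #|S|)%N.
  apply: leq_trans (subset_leq_card (_ : D :|: C \subset S)); last by rewrite subUset DS.
  by rewrite cardsU DC cards0 subn0 -addn1 leq_add2l card_gt0.
have IHD X Y : X != set0 -> Y != set0 -> (#|X :+: Y| <= #|D|)%N -> kneser_ineq X Y.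
  by move=> Xn Yn leXY; apply: IH => //; apply/kneser_measure_lt/(leq_ltn_trans leXY).
have Dn : D != set0 by apply/set0Pn; exists (a + b).
have qD : ~~ (q \subset D) by apply/subsetPn; exists (a + b + h).
have eK : period (C :|: D) = period D := period_setU_acoset Dq Dn qD qC.
have ltK : (#|period D| < #|period C|)%N.
  rewrite proper_card // properE period_cross_addset_sub ?Dn //=; apply/subsetPn.
  by exists h => //; apply: contra wD => hD; exact: mem_period.
have LD : L \subset period D := sub_period_cross_addset a b LC LA LB.
have UB := union_bound aA bB wq wD IHD; rewrite -/D in UB.
exists (C :|: D); last by rewrite eK.
have CDn : C :|: D != set0 by apply/set0Pn; exists (a + b); rewrite inE abD orbT.
apply: admissibleI => //; [by rewrite subUset CS DS | by rewrite eK | rewrite eK].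
have := cardsUI C D; rewrite setIC DC cards0 addn0 => ->.
by move: ineqC UB; clear; lia.
Qed.

Lemma kneser_core : (#|A| + #|B| <= #|S| + #|L|)%N.
Proof.
have [C admC minC] := arg_minnP (fun C => #|period C|) admissible_init.
have /and4P[CS _ LC _] := admC; have ineqC := admissible_card admC.
have CL : period C \subset L.
  apply: contraT => /(admissible_shrink admC)[C' admC' ltC'].
  by have := minC C' admC'; rewrite leqNgt ltC'.
have eC : period C = L by apply/eqP; rewrite eqEsubset CL LC.
rewrite eC (addset_periodic (period0 _) (sub_periodU LA LB)) in ineqC.
have := subset_leq_card CS; have := cardsUI A B.
by move: ineqC; clear; lia.
Qed.

End Core.

Lemma kneser_periodic A B :
  (forall X Y, X != set0 -> Y != set0 ->
     (kneser_measure X Y < kneser_measure A B)%N -> kneser_ineq X Y) ->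
  period (A :+: B) \subset period A -> period (A :+: B) \subset period B ->
  A != set0 -> B != set0 -> (#|A| + #|B| <= #|A :+: B| + #|period (A :+: B)|)%N.
Proof.
move=> IH LA LB An /set0Pn[b0 b0B]; set L := period (A :+: B).
have [BL|/subsetPn[b bB bL]] := boolP (B \subset acoset L b0).
  by rewrite leq_add ?(leq_card_addset _ b0B) // -(card_acoset L b0) subset_leq_card.
have [a aA abA] : exists2 a, a \in A & a + (b - b0) \notin A.
  apply/not_mem_period; apply: contra bL => /(subsetP (period_addsetl A B)).
  by rewrite in_acoset.
set B' := B :+: [set a - b0].
have eS : A :+: B' = A :+: B :+: [set a - b0] by rewrite addsetA.
have eL : period (A :+: B') = L by rewrite eS period_translate.
have LB' : L \subset period B' by rewrite /B' period_translate.
have aB' : a \in B' by rewrite /B' addset1; apply/imsetP; exists b0; rewrite ?subrKC.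
have bB' : b + (a - b0) \in B' by rewrite mem_addset ?inE.
have bA : b + (a - b0) \notin A by rewrite addrCA.
have mu_eq : kneser_measure A B' = kneser_measure A B.
  rewrite /kneser_measure eL eS !card_addset1 (addset_periodic (period0 _) LB').
  by rewrite (addset_periodic (period0 _) LB) card_addset1.
have := kneser_core (a0 := a) (b1 := b + (a - b0)) _ _ aA aB' bB' bA.
rewrite mu_eq eL eS !card_addset1; apply=> //; exact: IH.
Qed.

Theorem kneser A B : A != set0 -> B != set0 -> kneser_ineq A B.
Proof.
have [n] := ubnP (kneser_measure A B); elim: n A B => // n IHn A B.
rewrite ltnS => le_mu An Bn; set L := period (A :+: B).
have eS : (A :+: L) :+: (B :+: L) = A :+: B by rewrite addset_period2 addset_period.
have LL X : X :+: L :+: L = X :+: L by rewrite -addsetA period_addsetK.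
have := kneser_periodic (A := A :+: L) (B := B :+: L); rewrite eS; apply; rewrite ?addset_period_neq0 //.
- move=> X Y Xn Yn; rewrite {2}/kneser_measure eS LL => lt_mu.
  by apply: IHn => //; apply: leq_trans lt_mu le_mu.
- exact: period_addset_period.
- exact: period_addset_period.
Qed.

End Kneser.

(** * Sumsets of rho-maximal sets *)

Section Sumset.
Variable G : finZmodType.
Implicit Types A B P : {set G}.

Lemma sumsetS r A : sumset r.+1 A = sumset r A :+: A0 A.
Proof. by []. Qed.

Lemma A0_id A : 0 \in A -> A0 A = A.
Proof. by move=> A_0; apply/setUidPr; rewrite sub1set. Qed.

Lemma eq_sumset_A0 r A B : A0 A = A0 B -> sumset r A = sumset r B.
Proof. by move=> eA; elim: r => //= r ->; rewrite eA. Qed.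

Lemma mem0_sumset r A : 0 \in sumset r A.
Proof. by elim: r => [|r IHr]; rewrite ?inE // sumsetS -[0]addr0 mem_addset ?setU11. Qed.

Lemma sumset_addset_period r A P : 0 \in A -> (0 < r)%N ->
  sumset r (A :+: period P) = sumset r A :+: period P.
Proof.
move=> A_0; have AP_0 : 0 \in A :+: period P by rewrite -[0]addr0 mem_addset ?period0.
elim: r => // -[_ _|r IHr _]; rewrite (sumsetS _ (A :+: _)) (sumsetS _ A) !A0_id //.
  by rewrite addsetA.
by rewrite IHr // addset_period2.
Qed.

Lemma period_sumset_le j k A : (j <= k)%N -> period (sumset j A) \subset period (sumset k A).
Proof.
move/subnK <-; elim: (k - j)%N => // m IHm.
by rewrite addSn sumsetS (subset_trans IHm) ?period_addsetl.
Qed.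

Lemma card_sumset_lb k A : 0 \in A -> period (sumset k A) \subset [set 0] ->
  forall j, (j <= k)%N -> (1 + j * #|A|.-1 <= #|sumset j A|)%N.
Proof.
move=> A_0 Pk; have An : A != set0 by apply/set0Pn; exists 0.
elim=> [|j IHj] ltjk; first by rewrite cards1.
have Sn : sumset j A != set0 by apply/set0Pn; exists 0; exact: mem0_sumset.
have P1 : (#|period (sumset j.+1 A)| <= 1)%N.
  by rewrite -(cards1 (0 : G)) subset_leq_card // (subset_trans (period_sumset_le A ltjk)).
have := kneser_ineq_weak (kneser Sn An); have := IHj (ltnW ltjk).
have : (0 < #|A|)%N by rewrite card_gt0.
rewrite sumsetS (A0_id A_0) in P1 *; rewrite mulSn; lia.
Qed.

End Sumset.

Section RhoMaximal.
Variables (G : finZmodType) (rho : nat) (A : {set G}).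
Hypotheses (rho_ge2 : (2 <= rho)%N) (maxA : rho_maximal rho A).

Lemma rho_maximal_mem0 : 0 \in A.
Proof.
case/andP: maxA => notG /forallP/(_ (0 |: A)); apply: contraTT => A_0.
rewrite properUr ?sub1set //= (eq_sumset_A0 _ (_ : A0 (0 |: A) = A0 A)) //.
by rewrite /A0 setUA setUid.
Qed.

Lemma rho_maximal_period : period (sumset rho.-1 A) \subset period A.
Proof.
set P := period (sumset rho.-1 A); have sAP := subset_addset0 A (period0 (sumset rho.-1 A)).
suff eA : A :+: P = A by apply: sub_period; rewrite eA.
have [prA|] := boolP (A \proper A :+: P); last first.
  by rewrite properEneq sAP andbT negbK => /eqP <-.
case/andP: maxA => notG /forallP/(_ (A :+: P)); rewrite prA /=.
rewrite sumset_addset_period ?rho_maximal_mem0 ?addset_period ?(negbTE notG) //.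
by case: rho rho_ge2 => [|[]].
Qed.

Lemma rho_maximal_card : aperiodic A -> ((#|A|.-1 * rho.-1).+2 <= #|G|)%N.
Proof.
move=> /eqP apA; have := card_sumset_lb rho_maximal_mem0 (_ : _ \subset [set 0]) (leqnn rho.-1).
rewrite -apA rho_maximal_period => /(_ isT).
have : (#|sumset rho.-1 A| < #|G|)%N by rewrite -cardsT proper_card // properT; case/andP: maxA.
lia.
Qed.

End RhoMaximal.

Lemma t_rho_bound (G : finZmodType) rho :
  (2 <= rho)%N -> (t_rho G rho * rho.-1 + 2 <= #|G| + rho.-1)%N.
Proof.
move=> rho_ge2; have k_gt0 : (0 < rho.-1)%N by case: rho rho_ge2 => [|[]].
have G_gt0 : (0 < #|G|)%N by apply/card_gt0P; exists 0.
rewrite /t_rho; elim/big_ind: _ => [|m n|A /and3P[apA maxA _]]; first by lia.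
  by rewrite /maxn; case: ifP.
have : (0 < #|A|)%N by apply/card_gt0P; exists 0; exact: rho_maximal_mem0 maxA.
have := rho_maximal_card rho_ge2 maxA apA; nia.
Qed.

Theorem proposition2p8 (G : finZmodType) (rho : nat) (hrho : (2 <= rho)%N) :
  ((t_rho G rho)%:Z <= divz (#|G|%:Z - 2) (rho%:Z - 1) + 1)%R.
Proof.
have := t_rho_bound G hrho; have k_gt0 : (0 < rho.-1)%N by case: rho hrho => [|[]].
have -> : (rho%:Z - 1 = rho.-1%:Z)%R by rewrite -subn1 -subzn // ltnW.
rewrite -Num.Theory.lerBlDr lez_divRL ?ltz_nat //; lia.
Qed.
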